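(* In a combinatorial auction as described in the context, if $(x^*,p)$ is a Walrasian equilibrium whose payments $\rho_i=p\,a^{i*}$ form a minimum-revenue core-selecting (MRC) payment vector, then $(x^*,p)$ is a price-match equilibrium.
   Context: Combinatorial auction: item types $j\in\mathcal J$ with supply $c_j\in\mathbb Z_{\ge1}$ (vector $c$); bidders $\mathcal I$; finite set of bids $\mathcal K$, bid $k$ made by bidder $i(k)$ with bundle $a^k\in\mathbb Z^J_{\ge0}$, $a^k\le c$, and amount $b_k\ge0$; $\mathcal K_i$ = bids of bidder $i$; bids taken truthful. $\bm A$ = matrix with columns $a^k$, $\bm B$ with $\bm B_{i,k}=1$ iff $k\in\mathcal K_i$. Feasible allocation: $x\in\{0,1\}^K$, $\bm Ax\le c$, $\bm Bx\le\bm 1$. $w(\mathcal C,c',\cdot)$ = maximum total bid amount over feasible allocations with supply $c'$ using only bids of bidders in $\mathcal C$. $x^*$ efficient (optimal) allocation; $a^{i*},b_{i*}$ bundle and amount of $i$'s accepted bid ($\bm 0,0$ if none). A payment vector $\rho$ ($\rho_i=0$ for non-winners) is core-selecting at $x^*$ if $\rho_i\le b_{i*}$ for all $i$ and $\sum_{i\in\mathcal C}(b_{i*}-\rho_i)+\sum_{i\in\mathcal I}\rho_i\ge w(\mathcal C,c,\mathcal K^{\mathcal C})$ for all $\mathcal C\subseteq\mathcal I$ ($\mathcal K^{\mathcal C}$ = bids of bidders in $\mathcal C$); it is MRC if it minimizes $\sum_i\rho_i$ among core-selecting payment vectors. A Walrasian equilibrium (WE) is $(x^*,p)$, $p\in\mathbb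 R^J_{\ge0}$, with $s_i=b_{i*}-p\,a^{i*}\ge0$, $p\,a^k+s_{i(k)}\ge b_k$ for all bids $k$, and $p_j=0$ whenever $(\bm Ax^* )_j<c_j$. A WE is a price-match equilibrium (PME) if for every bidder $i$ there is a feasible allocation $x^{-i}$ with $x^{-i}_k=0$ for $k\in\mathcal K_i$, $p\,a^k\le b_k$ whenever $x^{-i}_k=1$, and $p\bm Ax^{-i}=p\bm Ax^*$. (Items may include artificial items, i.e. valid cuts added as rows of $\bm A$.) *)

From HB Require Import structures.
From mathcomp Require Import all_boot all_order all_algebra.
Set Implicit Arguments. Unset Strict Implicit. Unset Printing Implicit Defensive.
Import Order.TTheory GRing.Theory Num.Theory.
Local Open Scope ring_scope.

(* Combinatorial auction data:
   R      : ordered field of amounts/prices (e.g. the reals),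
   I      : bidders, J : item types (incl. artificial items), K : bids,
   owner k = i(k), a k = bundle a^k (column of A), b k = amount b_k.
   An allocation x in {0,1}^K is represented by the set {k | x_k = 1}. *)
Section Auction.
Variables (R : realFieldType) (I J K : finType)
          (owner : K -> I) (a : K -> J -> nat) (b : K -> R).

Definition Ax (x : {set K}) (j : J) : nat := (\sum_(k in x) a k j)%N.

Definition feasible (c' : J -> nat) (x : {set K}) : bool :=
  [forall j, Ax x j <= c' j]%N &&
  [forall i, #|[set k in x | owner k == i]| <= 1]%N.

Definition uses_only (C : {set I}) (x : {set K}) : bool :=
  [forall k in x, owner k \in C].

(* w(C, c', K^C): maximum total bid amount over feasible allocations with
   supply c' using only bids of bidders in C (the empty allocation is always
   feasible, so with b >= 0 the max with 0 is the true maximum) *)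
Definition w (C : {set I}) (c' : J -> nat) : R :=
  \big[Num.max/0]_(x : {set K} | feasible c' x && uses_only C x)
     \sum_(k in x) b k.

Definition efficient (c : J -> nat) (x : {set K}) : Prop :=
  feasible c x /\ \sum_(k in x) b k = w setT c.

(* bundle a^{i*} and amount b_{i*} of bidder i's accepted bid in x
   (0 if none; at most one bid per bidder is accepted in a feasible x) *)
Definition acc_bundle (x : {set K}) (i : I) (j : J) : nat :=
  (\sum_(k in x | owner k == i) a k j)%N.
Definition acc_amount (x : {set K}) (i : I) : R :=
  \sum_(k in x | owner k == i) b k.

Definition pdot (p : J -> R) (v : J -> nat) : R := \sum_j p j * (v j)%:R.

Definition payment_vector (x : {set K}) (rho : I -> R) : Prop :=
  forall i, [set k in x | owner k == i] = set0 -> rho i = 0.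

Definition core_selecting (c : J -> nat) (x : {set K}) (rho : I -> R) : Prop :=
  [/\ payment_vector x rho,
      forall i, rho i <= acc_amount x i &
      forall C : {set I},
        w C c <= \sum_(i in C) (acc_amount x i - rho i) + \sum_i rho i].

Definition MRC (c : J -> nat) (x : {set K}) (rho : I -> R) : Prop :=
  core_selecting c x rho /\
  forall rho', core_selecting c x rho' -> \sum_i rho i <= \sum_i rho' i.

Definition surplus (x : {set K}) (p : J -> R) (i : I) : R :=
  acc_amount x i - pdot p (acc_bundle x i).

Definition walrasian (c : J -> nat) (x : {set K}) (p : J -> R) : Prop :=
  [/\ forall j, 0 <= p j,
      forall i, 0 <= surplus x p i,
      forall k, b k <= pdot p (a k) + surplus x p (owner k) &
      forall j, (Ax x j < c j)%N -> p j = 0].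

Definition price_match (c : J -> nat) (x : {set K}) (p : J -> R) : Prop :=
  walrasian c x p /\
  forall i, exists y : {set K},
    [/\ feasible c y,
        forall k, k \in y -> owner k != i,
        forall k, k \in y -> pdot p (a k) <= b k &
        pdot p (Ax y) = pdot p (Ax x)].

End Auction.

(* If rho_i > 0 and every core constraint of a
   coalition C not containing i had positive slack, lowering rho_i by the
   smallest such slack would give a core-selecting vector of smaller revenue;
   so by minimality either rho_i = 0 or some such constraint is tight.
   If rho_i = 0, dropping i's bid from x* leaves p.Ax* unchanged.
   If C is tight, an optimal allocation y for C satisfies
     sum_y b >= w(C) = sum_C s + p.Ax* >= sum_(k in y) s_i(k) + p.Ay >= sum_y b,
   using p.Ay <= p.Ax* (prices vanish on unsold items) and the Walrasian
   inequalities b_k <= p.a^k + s_i(k); hence all are equalities, and y is a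
   price-matching allocation avoiding i. *)

From mathcomp Require Import all_boot all_order all_algebra lra.
Import Order.TTheory GRing.Theory Num.Theory.
Set Implicit Arguments. Unset Strict Implicit. Unset Printing Implicit Defensive.
Local Open Scope ring_scope.

Section PriceVectors.
Variables (R : realFieldType) (J : finType) (p : J -> R).

Lemma pdot_sum (T : Type) (r : seq T) (P : pred T) (F : T -> J -> nat) :
  pdot p (fun j => \sum_(t <- r | P t) F t j)%N = \sum_(t <- r | P t) pdot p (F t).
Proof.
rewrite /pdot; under eq_bigr => j _ do rewrite natr_sum mulr_sumr.
exact: exchange_big.
Qed.

Lemma pdotD (f g : J -> nat) :
  pdot p (fun j => f j + g j)%N = pdot p f + pdot p g.
Proof. by rewrite /pdot -big_split; apply: eq_bigr => j _; rewrite natrD mulrDr. Qed.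

Lemma pdot_ge0 (f : J -> nat) : (forall j, 0 <= p j) -> 0 <= pdot p f.
Proof. by move=> p_ge0; apply: sumr_ge0 => j _; rewrite mulr_ge0. Qed.

Lemma pdot_le (f g : J -> nat) :
  (forall j, p j != 0 -> (f j <= g j)%N) -> (forall j, 0 <= p j) -> pdot p f <= pdot p g.
Proof.
move=> fg p_ge0; apply: ler_sum => j _.
have [->|pj0] := eqVneq (p j) 0; first by rewrite !mul0r.
by rewrite ler_wpM2l // ler_nat fg.
Qed.

End PriceVectors.

Lemma sumr_lower_at (R : numDomainType) (I : finType) (P : pred I)
    (f : I -> R) (i : I) (e : R) :
  \sum_(h | P h) (f h - (h == i)%:R * e) = \sum_(h | P h) f h - (P i)%:R * e.
Proof.
rewrite sumrB -mulr_suml; congr (_ - _ * _).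
case Pi: (P i).
  by rewrite (bigD1 i) //= eqxx big1 ?addr0 // => h /andP[_ /negbTE ->].
by rewrite big1 // => h Ph; case: eqP Ph => // ->; rewrite Pi.
Qed.

Section Auction.
Variables (R : realFieldType) (I J K : finType)
          (owner : K -> I) (a : K -> J -> nat) (b : K -> R).

Local Notation Ax := (Ax a).
Local Notation feasible := (feasible owner a).
Local Notation uses_only := (uses_only owner).
Local Notation w := (w owner a b).
Local Notation acc_bundle := (acc_bundle owner a).
Local Notation acc_amount := (acc_amount owner b).
Local Notation surplus := (surplus owner a b).
Local Notation walrasian := (walrasian owner a b).
Local Notation core_selecting := (core_selecting owner a b).
Local Notation MRC := (MRC owner a b).

Definition core_rhs (x : {set K}) (rho : I -> R) (C : {set I}) : R :=
  \sum_(i in C) (acc_amount x i - rho i) + \sum_i rho i.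

Definition price_match_allocation (c : J -> nat) (x : {set K}) (p : J -> R)
    (i : I) (y : {set K}) : Prop :=
  [/\ feasible c y,
      forall k, k \in y -> owner k != i,
      forall k, k \in y -> pdot p (a k) <= b k &
      pdot p (Ax y) = pdot p (Ax x)].

Lemma feasible0 c : feasible c set0.
Proof.
apply/andP; split; apply/forallP => ?; first by rewrite /Ax big_set0.
by rewrite setIdE set0I cards0.
Qed.

Lemma feasibleS c (x y : {set K}) : y \subset x -> feasible c x -> feasible c y.
Proof.
move=> yx /andP[/forallP supply_x /forallP unit_x]; apply/andP; split; apply/forallP.
  move=> j; apply: leq_trans (supply_x j).
  by rewrite /Ax [X in (_ <= X)%N](big_setID y) /= (setIidPr yx) leq_addr.
move=> i; apply: leq_trans (unit_x i); apply: subset_leq_card.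
by apply/subsetP => k; rewrite !inE => /andP[/(subsetP yx) -> ->].
Qed.

Lemma feasible_owner_set1 c x k :
  feasible c x -> k \in x -> [set k' in x | owner k' == owner k] = [set k].
Proof.
move=> /andP[_ /forallP /(_ (owner k)) unit_k] kx; apply/eqP.
by rewrite eq_sym eqEcard sub1set inE kx eqxx cards1.
Qed.

Lemma big_owner_bid (V : Type) (idx : V) (op : Monoid.law idx) c x k
    (F : K -> V) :
  feasible c x -> k \in x -> \big[op/idx]_(k' in x | owner k' == owner k) F k' = F k.
Proof.
move=> fx kx; rewrite -(big_set1 op k F) -(feasible_owner_set1 fx kx).
by apply: eq_bigl => k'; rewrite inE.
Qed.

Lemma acc_bundle_bid c x k :
  feasible c x -> k \in x -> acc_bundle x (owner k) =1 a k.
Proof. by move=> fx kx j; apply: big_owner_bid fx kx. Qed.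

Lemma acc_amount_bid c x k :
  feasible c x -> k \in x -> acc_amount x (owner k) = b k.
Proof. exact: big_owner_bid. Qed.

Lemma Ax_split x i j :
  Ax x j = (Ax [set k in x | owner k != i] j + acc_bundle x i j)%N.
Proof.
rewrite /Ax /acc_bundle (bigID (fun k => owner k != i)) /=; congr (_ + _)%N.
  by apply: eq_bigl => k; rewrite inE.
by apply: eq_bigl => k; rewrite negbK.
Qed.

Lemma sum_pdot_acc_bundle (p : J -> R) x :
  \sum_i pdot p (acc_bundle x i) = pdot p (Ax x).
Proof.
rewrite /Ax pdot_sum (partition_big owner predT) //=.
by apply: eq_bigr => i _; rewrite /acc_bundle pdot_sum.
Qed.

Lemma w_attained C c :
  exists2 y, feasible c y && uses_only C y & w C c <= \sum_(k in y) b k.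
Proof.
apply: (big_ind (fun v => exists2 y, feasible c y && uses_only C y &
                                     v <= \sum_(k in y) b k)).
- by exists set0; rewrite ?big_set0 // feasible0; apply/forall_inP => k; rewrite inE.
- by move=> v1 v2 [y1 ? ?] [y2 ? ?]; rewrite maxEle; case: ifP; [exists y2|exists y1].
- by move=> y y_ok; exists y.
Qed.

Lemma sum_owner_le c C y (s : I -> R) :
  (forall i, 0 <= s i) -> feasible c y -> uses_only C y ->
  \sum_(k in y) s (owner k) <= \sum_(i in C) s i.
Proof.
move=> s_ge0 /andP[_ /forallP unit_y] /forall_inP yC.
rewrite (partition_big owner (mem C)) //=; apply: ler_sum => i _.
rewrite (eq_bigr (fun=> s i)) => [|k /andP[_ /eqP ->] //].
have -> : \sum_(k in y | owner k == i) s i = s i *+ #|[set k in y | owner k == i]|.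
  by rewrite -sumr_const; apply: eq_bigl => k; rewrite inE.
by case: #|_| (unit_y i) => [|[|//]] _; rewrite ?mulr0n ?mulr1n.
Qed.

Lemma core_rhsE x (rho : I -> R) (C : {set I}) :
  core_rhs x rho C = \sum_(i in C) acc_amount x i + \sum_(i | i \notin C) rho i.
Proof. by rewrite /core_rhs sumrB (bigID (mem C) predT) /=; lra. Qed.

Lemma core_selecting_lower c x (rho : I -> R) i :
  core_selecting c x rho -> 0 < rho i ->
  (forall C : {set I}, i \notin C -> w C c < core_rhs x rho C) ->
  exists2 rho', core_selecting c x rho' & \sum_h rho' h < \sum_h rho h.
Proof.
move=> [pay_rho rho_le core_rho] rho_i_gt0 slack.
pose eps := \big[Order.min/rho i]_(C : {set I} | i \notin C) (core_rhs x rho C - w C c).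
have eps_gt0 : 0 < eps.
  by apply/bigmin_gtP; split => // C iC; rewrite subr_gt0 slack.
have eps_slack (C : {set I}) : i \notin C -> eps <= core_rhs x rho C - w C c.
  exact: (bigmin_le_cond _ (fun C => core_rhs x rho C - w C c)).
pose rho' h := rho h - (h == i)%:R * eps.
have ind_ge0 h : 0 <= (h == i)%:R * eps by rewrite mulr_ge0 ?ler0n ?ltW.
exists rho'; last by rewrite (sumr_lower_at xpredT) /= mul1r; lra.
split.
- move=> h no_bid; have rho_h0 := pay_rho h no_bid.
  have hi : h != i by apply: contraTneq rho_i_gt0 => <-; rewrite rho_h0 ltxx.
  by rewrite /rho' (negbTE hi) mul0r subr0.
- by move=> h; have := rho_le h; have := ind_ge0 h; rewrite /rho'; lra.
- move=> C; have := core_rho C.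
  rewrite -/(core_rhs x rho C) -/(core_rhs x rho' C) !core_rhsE.
  rewrite (sumr_lower_at (fun h => h \notin C)) /=.
  case: (boolP (i \in C)) => iC /=; first by rewrite mul0r subr0.
  by have := eps_slack C iC; rewrite core_rhsE mul1r; lra.
Qed.

Lemma MRC_tight_or_le0 c x (rho : I -> R) i :
  MRC c x rho ->
  rho i <= 0 \/ exists2 C : {set I}, i \notin C & core_rhs x rho C <= w C c.
Proof.
move=> [core_rho min_rho]; have [|rho_i_gt0] := lerP (rho i) 0; first by left.
right; have [C /andP[iC tight]|no_tight] :=
  pickP (fun C : {set I} => (i \notin C) && (core_rhs x rho C <= w C c)).
  by exists C.
have slack (C : {set I}) : i \notin C -> w C c < core_rhs x rho C.
  by move=> iC; move: (no_tight C); rewrite iC ltNge => /negbT.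
have [rho' core_rho' lt_rho'] := core_selecting_lower core_rho rho_i_gt0 slack.
by have := min_rho rho' core_rho'; rewrite leNgt lt_rho'.
Qed.

Section Walrasian.
Variables (c : J -> nat) (x : {set K}) (p : J -> R).
Hypotheses (fx : feasible c x) (WE : walrasian c x p).

Lemma walrasian_pdot_Ax_le y :
  feasible c y -> pdot p (Ax y) <= pdot p (Ax x).
Proof.
case: WE => p_ge0 _ _ p_eq0 /andP[/forallP supply_y _].
apply: pdot_le => // j; apply: contraNT; rewrite -ltnNge => ltxy.
by rewrite p_eq0 ?eqxx // (leq_trans ltxy).
Qed.

Lemma walrasian_bid_le k : k \in x -> pdot p (a k) <= b k.
Proof.
case: WE => _ s_ge0 _ _ kx; have := s_ge0 (owner k).
rewrite /surplus (acc_amount_bid fx kx) subr_ge0 /pdot.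
by under eq_bigr => j _ do rewrite (acc_bundle_bid fx kx).
Qed.

Let rho i := pdot p (acc_bundle x i).

Lemma core_rhs_pdot C :
  core_rhs x rho C = \sum_(i in C) surplus x p i + pdot p (Ax x).
Proof. by rewrite /core_rhs sum_pdot_acc_bundle. Qed.

Lemma price_match_tight i (C : {set I}) :
  i \notin C -> core_rhs x rho C <= w C c ->
  exists y, price_match_allocation c x p i y.
Proof.
move=> iC tight; have [y /andP[fy yC] w_le] := w_attained C c.
case: (WE) => _ s_ge0 b_le _.
pose D k := pdot p (a k) + surplus x p (owner k) - b k.
have D_ge0 k : k \in y -> 0 <= D k by rewrite subr_ge0.
have sumD : \sum_(k in y) D k =
    pdot p (Ax y) + \sum_(k in y) surplus x p (owner k) - \sum_(k in y) b k.
  by rewrite sumrB big_split /= pdot_sum.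
have s_le := sum_owner_le s_ge0 fy yC.
have A_le := walrasian_pdot_Ax_le fy.
have sumD_ge0 : 0 <= \sum_(k in y) D k by apply: sumr_ge0.
move: tight; rewrite core_rhs_pdot => tight.
have sumD0 : \sum_(k in y) D k = 0 by lra.
exists y; split => // [k ky|k ky|]; last by lra.
- by apply: contraNneq iC => <-; apply: (forall_inP yC).
- have /eqP := psumr_eq0P D_ge0 sumD0 ky.
  by rewrite subr_eq0 => /eqP <-; rewrite lerDl.
Qed.

Lemma price_match_unpriced i :
  rho i = 0 -> price_match_allocation c x p i [set k in x | owner k != i].
Proof.
move=> rho_i0; split.
- by apply: feasibleS fx; apply/subsetP => k; rewrite inE => /andP[].
- by move=> k; rewrite inE => /andP[].
- by move=> k; rewrite inE => /andP[kx _]; apply: walrasian_bid_le.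
- rewrite [in RHS]/pdot; under eq_bigr => j _ do rewrite (Ax_split x i j).
  by rewrite -/(pdot _ _) pdotD -/(rho i) rho_i0 addr0.
Qed.

End Walrasian.

End Auction.

Theorem corollary1 (R : realFieldType) (I J K : finType)
  (owner : K -> I) (a : K -> J -> nat) (b : K -> R)
  (c : J -> nat) (xs : {set K}) (p : J -> R)
  (hc : forall j, (0 < c j)%N)
  (ha : forall k j, (a k j <= c j)%N)
  (hb : forall k, 0 <= b k)
  (hx : efficient owner a b c xs)
  (hWE : walrasian owner a b c xs p)
  (hMRC : MRC owner a b c xs (fun i => pdot p (acc_bundle owner a xs i))) :
  price_match owner a b c xs p.
Proof.
have [fxs _] := hx; split => // i.
have [rho_le0|[C iC tight]] := MRC_tight_or_le0 i hMRC.
- exists [set k in xs | owner k != i]; apply: price_match_unpriced => //.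
  by apply/le_anti; rewrite rho_le0 pdot_ge0 //; case: hWE.
- exact: price_match_tight iC tight.
Qed.
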